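(* Assume $0<x^0<u^*$ and let $c>0$ be such that $\eta(c)<u^*$. For $\epsilon\in(0,2(c\wedge(\overline x-c)))$ let $d_\epsilon=\frac{1-\epsilon(\overline x-c-\epsilon/2)}{c-\epsilon/2}$ and define the density $f_\epsilon$ on $[0,\overline x]$ by $f_\epsilon(x)=d_\epsilon$ for $x\in[0,c-\epsilon]$, $f_\epsilon(x)=(1-\frac{d_\epsilon}{\epsilon})x+c(\frac{d_\epsilon}{\epsilon}-1)+\epsilon$ for $x\in[c-\epsilon,c]$, and $f_\epsilon(x)=\epsilon$ for $x\in[c,\overline x]$ (and $f_\epsilon=0$ elsewhere). Suppose the law of $Y$ has density $f_\epsilon$ (so that $\bar y=\overline x$), let $b_\epsilon$ be the corresponding solution of the Cauchy problem below and $\overline m$ the corresponding point $\min\{m\in[0,\overline x]:b_\epsilon(m)=m\}$. Then there exists $\epsilon>0$ such that $\overline m<u^*$.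
   Context: $\mathcal I=(\alpha,\infty)$, $-\infty\le\alpha<0$; $\mu,\sigma:\mathcal I\to\mathbb R$ Lipschitz with $\sigma>0$, $\alpha,+\infty$ natural boundaries of $dX_t=\mu(X_t)dt+\sigma(X_t)dB_t$; $r>0$; $U:[0,\infty)\to[0,\infty)$. Assumptions: (a) $\mu,\sigma$ are $C^1$ with Lipschitz derivatives, $\mu(0)>rU(0)$, $\sup_{x\ge0}\mu'(x)<r$; (b) $U$ is nondecreasing, concave, $C^2$ on $[0,\infty)$, and for some $u^*\ge0$: $U'\ge1$ on $[0,u^*]$, $U'=1$ on $[u^*,\infty)$, $\mu U'+\frac12\sigma^2U''-rU>0$ on $[0,u^* )$; (c) $\mu$ is twice differentiable with $\mu''\le0$ on $[0,\infty)$. Notation. $\overline x>0$ is the unique point with $\mu-rU>0$ on $[0,\overline x)$ and $<0$ on $(\overline x,\infty)$. $\psi,\phi$ are the positive increasing and decreasing solutions of $\frac12\sigma^2u''+\mu u'-ru=0$. $D(x,m)=\psi'(x)\phi(m)-\phi'(x)\psi(m)$, $N(x,m)=\phi(x)\psi(m)-\psi(x)\phi(m)+D(x,m)\frac{\mu(x)}{r}-D(x,x)U(m)$, $G(x)=1-\mu'(x)/r$. For $m\in[0,\overline x]$, $\eta(m)$ is the unique solution $x\ge0$ of $N(x,m)=0$ (known to exist; $\eta$ is increasing with $\eta(\overline x)=\overline x$ and $\eta(m)\ge m$), and $x^0=\eta(0)$. Given a density $f$ of $Y$ with distribution function $F$ and support bound $\bar y$, let $E(x,m)=\frac{f(m)/F(m)}{G(x)}\frac{N(x,m)}{D(x,m)}$;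 the Cauchy problem is: find $b:[0,\overline x]\to[0,\overline x]$ with $b\in C([0,\overline x])\cap C^1((0,\overline x\wedge\bar y))$, $b(0)=x^0$, $b'(m)=E(b(m),m)$ on $(0,\overline x\wedge\bar y)$, $b\equiv b(\overline x\wedge\bar y)$ on $(\overline x\wedge\bar y,\overline x]$ (it has a unique solution). *)

From Stdlib Require Import Reals Lra.
From Coquelicot Require Import Coquelicot.
Open Scope R_scope.

(** The state space I = (alpha, +oo), alpha in [-oo, 0). *)
Definition inI (alpha : Rbar) (x : R) : Prop := Rbar_lt alpha x.

Definition Lipschitz_on (P : R -> Prop) (f : R -> R) : Prop :=
  exists L : R, forall x y, P x -> P y -> Rabs (f x - f y) <= L * Rabs (x - y).

(** Scale density s and speed density m of dX = mu(X)dt + sigma(X)dB,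
    with reference point 0 (which lies in I). *)
Definition scale_dens (mu sigma : R -> R) (x : R) : R :=
  exp (- RInt (fun y => 2 * mu y / (sigma y ^ 2)) 0 x).
Definition speed_dens (mu sigma : R -> R) (x : R) : R :=
  2 / (sigma x ^ 2 * scale_dens mu sigma x).

(** Feller's boundary classification (Karlin-Taylor): a boundary is natural iff
    both Sigma and N are infinite.  Right boundary +oo: *)
Definition natural_right (mu sigma : R -> R) : Prop :=
  let s := scale_dens mu sigma in
  let m := speed_dens mu sigma in
  filterlim (fun t => RInt (fun y => RInt m 0 y * s y) 0 t)
            (Rbar_locally p_infty) (Rbar_locally p_infty) /\
  filterlim (fun t => RInt (fun y => RInt s 0 y * m y) 0 t)
            (Rbar_locally p_infty) (Rbar_locally p_infty).

(** filter "t -> alpha from inside I" *)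
Definition to_left_end (alpha : Rbar) : (R -> Prop) -> Prop :=
  match alpha with
  | Finite a => at_right a
  | _ => Rbar_locally m_infty
  end.

Definition natural_left (alpha : Rbar) (mu sigma : R -> R) : Prop :=
  let s := scale_dens mu sigma in
  let m := speed_dens mu sigma in
  filterlim (fun t => RInt (fun y => RInt m y 0 * s y) t 0)
            (to_left_end alpha) (Rbar_locally p_infty) /\
  filterlim (fun t => RInt (fun y => RInt s y 0 * m y) t 0)
            (to_left_end alpha) (Rbar_locally p_infty).

Definition diffusion_assumptions (alpha : Rbar) (mu sigma : R -> R) : Prop :=
  Rbar_lt alpha 0 /\
  Lipschitz_on (inI alpha) mu /\ Lipschitz_on (inI alpha) sigma /\
  (forall x, inI alpha x -> 0 < sigma x) /\
  natural_left alpha mu sigma /\ natural_right mu sigma /\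
  (forall x, inI alpha x -> ex_derive mu x /\ ex_derive sigma x) /\
  Lipschitz_on (inI alpha) (Derive mu) /\ Lipschitz_on (inI alpha) (Derive sigma) /\
  (forall x, 0 <= x -> ex_derive (Derive mu) x /\ Derive (Derive mu) x <= 0).

(** Assumption on U : [0,oo) -> [0,oo) (only its values on [0,oo) matter);
    U1, U2 are its first and second derivatives on [0,oo)
    (C^2 on [0,oo): derivatives on (0,oo) extending continuously to 0). *)
Definition within_nonneg : R -> Prop := fun y => 0 <= y.

Definition U_assumptions (mu sigma : R -> R) (r : R) (U U1 U2 : R -> R) (ustar : R) : Prop :=
  (forall x, 0 <= x -> 0 <= U x) /\
  (forall x y, 0 <= x -> x <= y -> U x <= U y) /\
  (forall x y t, 0 <= x -> 0 <= y -> 0 <= t <= 1 ->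
      t * U x + (1 - t) * U y <= U (t * x + (1 - t) * y)) /\
  (forall x, 0 < x -> is_derive U x (U1 x) /\ is_derive U1 x (U2 x)) /\
  filterlim U (within within_nonneg (locally 0)) (locally (U 0)) /\
  (forall x, 0 <= x ->
     filterlim U1 (within within_nonneg (locally x)) (locally (U1 x)) /\
     filterlim U2 (within within_nonneg (locally x)) (locally (U2 x))) /\
  0 <= ustar /\
  (forall x, 0 <= x <= ustar -> 1 <= U1 x) /\
  (forall x, ustar <= x -> U1 x = 1) /\
  (forall x, 0 <= x < ustar ->
     mu x * U1 x + / 2 * sigma x ^ 2 * U2 x - r * U x > 0).

Definition a_assumptions (mu : R -> R) (r : R) (U : R -> R) : Prop :=
  mu 0 > r * U 0 /\
  exists k, k < r /\ forall x, 0 <= x -> Derive mu x <= k.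

Definition is_xbar (mu : R -> R) (r : R) (U : R -> R) (xbar : R) : Prop :=
  0 < xbar /\
  (forall x, 0 <= x < xbar -> mu x - r * U x > 0) /\
  (forall x, xbar < x -> mu x - r * U x < 0).

Definition solves_ode (alpha : Rbar) (mu sigma : R -> R) (r : R) (u : R -> R) : Prop :=
  forall x, inI alpha x ->
    ex_derive u x /\ ex_derive (Derive u) x /\
    / 2 * sigma x ^ 2 * Derive (Derive u) x + mu x * Derive u x - r * u x = 0.

Definition is_psi (alpha : Rbar) (mu sigma : R -> R) (r : R) (psi : R -> R) : Prop :=
  solves_ode alpha mu sigma r psi /\
  (forall x, inI alpha x -> 0 < psi x) /\
  (forall x y, inI alpha x -> inI alpha y -> x < y -> psi x < psi y).

Definition is_phi (alpha : Rbar) (mu sigma : R -> R) (r : R) (phi : R -> R) : Prop :=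
  solves_ode alpha mu sigma r phi /\
  (forall x, inI alpha x -> 0 < phi x) /\
  (forall x y, inI alpha x -> inI alpha y -> x < y -> phi y < phi x).

Definition Dfun (psi phi : R -> R) (x m : R) : R :=
  Derive psi x * phi m - Derive phi x * psi m.

Definition Nfun (psi phi mu : R -> R) (r : R) (U : R -> R) (x m : R) : R :=
  phi x * psi m - psi x * phi m + Dfun psi phi x m * (mu x / r)
  - Dfun psi phi x x * U m.

Definition Gfun (mu : R -> R) (r : R) (x : R) : R := 1 - Derive mu x / r.

Definition is_eta (psi phi mu : R -> R) (r : R) (U : R -> R) (xbar : R) (eta : R -> R) : Prop :=
  forall m, 0 <= m <= xbar -> 0 <= eta m /\ Nfun psi phi mu r U (eta m) m = 0.

Definition d_eps (c xbar eps : R) : R :=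
  (1 - eps * (xbar - c - eps / 2)) / (c - eps / 2).

Definition f_eps (c xbar eps : R) (x : R) : R :=
  let d := d_eps c xbar eps in
  if Rlt_dec x 0 then 0
  else if Rle_dec x (c - eps) then d
  else if Rle_dec x c then (1 - d / eps) * x + c * (d / eps - 1) + eps
  else if Rle_dec x xbar then eps
  else 0.

Definition F_eps (c xbar eps : R) (m : R) : R := RInt (f_eps c xbar eps) 0 m.

Definition Efun (f F : R -> R) (psi phi mu : R -> R) (r : R) (U : R -> R) (x m : R) : R :=
  (f m / F m) / Gfun mu r x * (Nfun psi phi mu r U x m / Dfun psi phi x m).

(** The Cauchy problem (here ybar = xbar, so xbar /\ ybar = xbar and the
    "constant after xbar /\ ybar" condition is vacuous). *)
Definition cauchy_sol (f F : R -> R) (psi phi mu : R -> R) (r : R) (U : R -> R)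
    (xbar x0 : R) (b : R -> R) : Prop :=
  (forall m, 0 <= m <= xbar -> 0 <= b m <= xbar) /\
  (forall m, 0 <= m <= xbar ->
     filterlim b (within (fun y => 0 <= y <= xbar) (locally m)) (locally (b m))) /\
  (forall m, 0 < m < xbar ->
     is_derive b m (Efun f F psi phi mu r U (b m) m) /\ continuous (Derive b) m) /\
  b 0 = x0.

Definition is_first_fixed_point (b : R -> R) (xbar mbar : R) : Prop :=
  0 <= mbar <= xbar /\ b mbar = mbar /\
  (forall m, 0 <= m <= xbar -> b m = m -> mbar <= m).

From Stdlib Require Import Reals Lra.
From Coquelicot Require Import Coquelicot.
Open Scope R_scope.

(* Since x |-> N(x, m) / s(x) is strictly decreasing (its derivative is
   -G D / s), N(x, m) < 0 exactly when x > eta(m).  Pick y strictly between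
   max(eta 0, eta c) and ustar.  As a function of m, N(y, m) is a combination
   of psi, phi and U, so the generator maps it to -D(y, y) (L U) < 0 on
   (0, ustar); it is negative at m = 0 and m = c and positive at m = y < xbar,
   so the minimum principle makes it negative on [0, c], i.e. eta < y there.
   Hence b cannot cross y on [0, c]: wherever b >= y its slope E has the sign
   of N, which is negative.  On (c, xbar] the density equals eps while
   F >= 1/4, so the slope of b is at most 4 eps K, where K bounds N / (D G) on
   [0, xbar]^2; for eps small, b stays below ustar on all of [0, xbar], and so
   does its first fixed point.  When xbar < ustar this is immediate from
   b <= xbar. *)

(** * Real analysis *)

Lemma is_derive_pos_locally (f : R -> R) (x l : R) :
  is_derive f x l -> 0 < l ->
  exists d, 0 < d /\ forall h, 0 < h < d -> f (x - h) < f x /\ f x < f (x + h).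
Proof.
  intros Hd Hl. apply is_derive_Reals in Hd.
  destruct (Hd (l / 2) ltac:(lra)) as [[d Hd0] Hq].
  exists d; split; [exact Hd0|]. intros h Hh.
  assert (Hright := Hq h ltac:(lra) ltac:(simpl; rewrite Rabs_right; lra)).
  assert (Hleft := Hq (- h) ltac:(lra) ltac:(simpl; rewrite Rabs_left; lra)).
  apply Rabs_def2 in Hright as [_ Hright]. apply Rabs_def2 in Hleft as [_ Hleft].
  assert (0 < (f (x + h) - f x) / h * h) by (apply Rmult_lt_0_compat; lra).
  assert (0 < (f (x + - h) - f x) / - h * h) by (apply Rmult_lt_0_compat; lra).
  replace ((f (x + h) - f x) / h * h) with (f (x + h) - f x) in * by (field; lra).
  replace ((f (x + - h) - f x) / - h * h) with (f x - f (x - h)) in *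
    by (replace (x + - h) with (x - h) by ring; field; lra).
  lra.
Qed.

Lemma is_derive_neg_locally (f : R -> R) (x l : R) :
  is_derive f x l -> l < 0 ->
  exists d, 0 < d /\ forall h, 0 < h < d -> f x < f (x - h) /\ f (x + h) < f x.
Proof.
  intros Hd Hl.
  destruct (is_derive_pos_locally (fun t => - f t) x (- l)) as [d [Hd0 Hloc]];
    [exact (is_derive_opp f x l Hd) | lra |].
  exists d; split; [exact Hd0|]. intros h Hh. specialize (Hloc h Hh). lra.
Qed.

Lemma is_derive_continuity_pt (f : R -> R) (x l : R) :
  is_derive f x l -> continuity_pt f x.
Proof.
  intros H. apply derivable_continuous_pt. exists l. now apply is_derive_Reals.
Qed.

Lemma continuity_pt_pos_locally (f : R -> R) (x : R) :
  continuity_pt f x -> 0 < f x ->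
  exists d, 0 < d /\ forall t, Rabs (t - x) < d -> 0 < f t.
Proof.
  intros Hc Hpos. apply continuity_pt_filterlim in Hc.
  destruct (Hc _ (locally_ball (f x) (mkposreal _ Hpos))) as [[d Hd] Hball].
  exists d; split; [exact Hd|]. intros t Ht.
  specialize (Hball t Ht). change (Rabs (f t - f x) < f x) in Hball.
  apply Rabs_def2 in Hball. lra.
Qed.

Lemma is_derive_interior_min (f f1 f2 : R -> R) (a b p : R) :
  a < p < b ->
  (forall x, a < x < b -> is_derive f x (f1 x)) ->
  is_derive f1 p (f2 p) ->
  (forall x, a < x < b -> f p <= f x) ->
  f1 p = 0 /\ 0 <= f2 p.
Proof.
  intros Hp Hder Hder2 Hmin.
  assert (E1 : f1 p = 0).
  { destruct (Rtotal_order (f1 p) 0) as [Hlt | [Heq | Hgt]]; [exfalso | exact Heq | exfalso].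
    - destruct (is_derive_neg_locally f p _ (Hder p Hp) Hlt) as [d [Hd Hloc]].
      set (h := Rmin (d / 2) ((b - p) / 2)).
      assert (0 < h < d) by (unfold h; apply Rmin_case_strong; intros; lra).
      assert (h <= (b - p) / 2) by apply Rmin_r.
      destruct (Hloc h ltac:(lra)) as [_ Hup].
      specialize (Hmin (p + h) ltac:(lra)). lra.
    - destruct (is_derive_pos_locally f p _ (Hder p Hp) Hgt) as [d [Hd Hloc]].
      set (h := Rmin (d / 2) ((p - a) / 2)).
      assert (0 < h < d) by (unfold h; apply Rmin_case_strong; intros; lra).
      assert (h <= (p - a) / 2) by apply Rmin_r.
      destruct (Hloc h ltac:(lra)) as [Hdown _].
      specialize (Hmin (p - h) ltac:(lra)). lra. }
  split; [exact E1|].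
  destruct (Rle_or_lt 0 (f2 p)) as [|Hlt]; [assumption|exfalso].
  (* otherwise f1 > 0 just left of p, so f increases into p *)
  destruct (is_derive_neg_locally f1 p _ Hder2 Hlt) as [d [Hd Hloc]].
  set (h := Rmin (d / 2) ((p - a) / 2)).
  assert (0 < h < d) by (unfold h; apply Rmin_case_strong; intros; lra).
  assert (h <= (p - a) / 2) by apply Rmin_r.
  destruct (MVT_cor2 f f1 (p - h) p ltac:(lra)) as [xi [Hxi1 Hxi2]].
  { intros z Hz. apply is_derive_Reals, Hder. lra. }
  destruct (Hloc (p - xi) ltac:(lra)) as [Hxi _].
  replace (p - (p - xi)) with xi in Hxi by ring. rewrite E1 in Hxi.
  specialize (Hmin (p - h) ltac:(lra)).
  assert (0 < f1 xi * (p - (p - h))) by (apply Rmult_lt_0_compat; lra).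
  lra.
Qed.

Lemma is_derive_neg_decreasing (f df : R -> R) (a : R) :
  (forall x, a <= x -> is_derive f x (df x) /\ df x < 0) ->
  forall x1 x2, a <= x1 -> x1 < x2 -> f x2 < f x1.
Proof.
  intros Hder x1 x2 H1 H12.
  destruct (MVT_cor2 f df x1 x2 H12) as [xi [Hmvt Hxi]].
  { intros z Hz. apply is_derive_Reals, Hder. lra. }
  assert (df xi * (x2 - x1) < 0) by (apply Rmult_neg_pos; [apply Hder|]; lra).
  lra.
Qed.

Lemma is_derive_le_growth (g dg : R -> R) (a z L : R) :
  a < z ->
  (forall t, a <= t <= z -> continuity_pt g t) ->
  (forall t, a < t < z -> is_derive g t (dg t) /\ dg t <= L) ->
  g z <= g a + L * (z - a).
Proof.
  intros Haz Hc Hder.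
  (* the mean value point may be an endpoint, where dg is not controlled *)
  destruct (MVT_gen g a z (fun t => Rmin (dg t) L)) as [xi [_ Hxi]];
    rewrite ?Rmin_left, ?Rmax_right by lra.
  - intros t Ht. rewrite Rmin_left by (apply Hder; lra). apply Hder; lra.
  - exact Hc.
  - assert (Rmin (dg xi) L * (z - a) <= L * (z - a))
      by (apply Rmult_le_compat_r; [lra | apply Rmin_r]).
    lra.
Qed.

Lemma stays_below (g : R -> R) (a z y : R) :
  a <= z ->
  (forall t, a <= t <= z -> continuity_pt g t) ->
  g a < y ->
  (forall p, a < p <= z -> y <= g p -> exists l, is_derive g p l /\ l < 0) ->
  g z < y.
Proof.
  intros Haz Hc Ha Hder.
  destruct (Rlt_or_le (g z) y) as [|Hz]; [assumption|exfalso].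
  destruct (continuity_ab_maj g a z Haz Hc) as [p [Hmax Hp]].
  assert (Hgp : y <= g p) by (specialize (Hmax z ltac:(lra)); lra).
  assert (Hpa : a < p) by (destruct (Req_dec p a) as [->|]; lra).
  destruct (Hder p ltac:(lra) Hgp) as [l [Hl Hneg]].
  destruct (is_derive_neg_locally g p l Hl Hneg) as [d [Hd Hloc]].
  set (h := Rmin (d / 2) (p - a)).
  assert (0 < h < d) by (unfold h; apply Rmin_case_strong; intros; lra).
  assert (h <= p - a) by apply Rmin_r.
  destruct (Hloc h ltac:(lra)) as [Hdec _].
  specialize (Hmax (p - h) ltac:(lra)). lra.
Qed.

Lemma exists_first_root (h : R -> R) (a z : R) :
  a <= z ->
  (forall t, a <= t <= z -> continuity_pt h t) ->
  0 < h a -> h z <= 0 ->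
  exists l, a <= l <= z /\ h l = 0 /\ forall s, a <= s < l -> 0 < h s.
Proof.
  intros Haz Hc Ha Hz.
  set (E := fun t => a <= t <= z /\ forall s, a <= s <= t -> 0 < h s).
  assert (HEa : E a) by (split; [lra | intros s Hs; replace s with a by lra; exact Ha]).
  destruct (completeness E) as [l [Hub Hlub]].
  { exists z. intros t Ht. apply Ht. }
  { now exists a. }
  assert (Hal : a <= l) by now apply Hub.
  assert (Hlz : l <= z) by (apply Hlub; intros t Ht; apply Ht).
  assert (Hbelow : forall s, a <= s < l -> 0 < h s).
  { intros s Hs. destruct (Rlt_or_le 0 (h s)) as [|Hn]; [assumption|exfalso].
    assert (l <= s); [|lra].
    apply Hlub. intros t [Ht HEt]. destruct (Rle_or_lt t s); [assumption|].
    specialize (HEt s ltac:(lra)). lra. }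
  exists l. split; [lra|]. split; [|exact Hbelow].
  destruct (Rtotal_order (h l) 0) as [Hneg | [Hzero | Hpos]];
    [exfalso | exact Hzero | exfalso].
  - assert (Hcl : continuity_pt (- h)%F l) by (apply continuity_pt_opp, Hc; lra).
    destruct (continuity_pt_pos_locally _ l Hcl ltac:(unfold opp_fct; lra))
      as [d [Hd Hnear]].
    assert (Hal' : a < l) by (destruct (Req_dec l a) as [->|]; lra).
    set (s := Rmax a (l - d / 2)).
    assert (a <= s < l) by (unfold s; split; [apply Rmax_l | apply Rmax_case]; lra).
    assert (l - d / 2 <= s) by apply Rmax_r.
    specialize (Hnear s ltac:(rewrite Rabs_left; lra)). unfold opp_fct in Hnear.
    specialize (Hbelow s ltac:(lra)). lra.
  - destruct (continuity_pt_pos_locally h l (Hc l ltac:(lra)) Hpos) as [d [Hd Hnear]].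
    assert (Hlz' : l < z) by (destruct (Req_dec l z) as [->|]; lra).
    set (t := Rmin (l + d / 2) z).
    assert (l < t <= z) by (unfold t; split; [apply Rmin_case | apply Rmin_r]; lra).
    assert (t <= l + d / 2) by apply Rmin_l.
    assert (E t).
    { split; [lra|]. intros s Hs. destruct (Rlt_or_le s l); [apply Hbelow; lra|].
      apply Hnear. rewrite Rabs_right; lra. }
    assert (t <= l) by now apply Hub.
    lra.
Qed.

Lemma min_principle (n n1 n2 mu sigma : R -> R) (r a b : R) :
  0 < r ->
  (forall x, a <= x <= b -> is_derive n x (n1 x) /\ is_derive n1 x (n2 x)) ->
  (forall x, a < x < b -> / 2 * sigma x ^ 2 * n2 x + mu x * n1 x - r * n x < 0) ->
  0 <= n a -> 0 <= n b ->
  forall x, a <= x <= b -> 0 <= n x.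
Proof.
  intros Hr Hder HL Ha Hb x Hx.
  destruct (Rle_or_lt 0 (n x)) as [|Hneg]; [assumption|exfalso].
  destruct (continuity_ab_min n a b ltac:(lra)) as [p [Hmin Hp]].
  { intros t Ht. exact (is_derive_continuity_pt _ _ _ (proj1 (Hder t Ht))). }
  assert (Hnp : n p < 0) by (specialize (Hmin x Hx); lra).
  assert (Hpa : a < p) by (destruct (Req_dec p a) as [->|]; lra).
  assert (Hpb : p < b) by (destruct (Req_dec p b) as [->|]; lra).
  destruct (is_derive_interior_min n n1 n2 a b p) as [H1 H2]; try lra.
  - intros t Ht. apply Hder. lra.
  - apply Hder. lra.
  - intros t Ht. apply Hmin. lra.
  - specialize (HL p ltac:(lra)). rewrite H1 in HL.
    assert (0 <= / 2 * sigma p ^ 2 * n2 p)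
      by (apply Rmult_le_pos; [apply Rmult_le_pos; [lra | apply pow2_ge_0] | exact H2]).
    nra.
Qed.

Definition clamp (a b x : R) : R := Rmax a (Rmin x b).

Lemma clamp_in (a b x : R) : a <= b -> a <= clamp a b x <= b.
Proof. intros. unfold clamp, Rmax, Rmin; repeat destruct Rle_dec; lra. Qed.

Lemma clamp_id (a b x : R) : a <= x <= b -> clamp a b x = x.
Proof. intros. unfold clamp, Rmax, Rmin; repeat destruct Rle_dec; lra. Qed.

Lemma clamp_dist (a b x y : R) : Rabs (clamp a b x - clamp a b y) <= Rabs (x - y).
Proof.
  unfold clamp, Rmax, Rmin; repeat destruct Rle_dec; unfold Rabs;
    repeat destruct Rcase_abs; lra.
Qed.

Lemma continuity_pt_clamp (a b x : R) : continuity_pt (clamp a b) x.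
Proof.
  intros e He. exists e. split; [exact He|]. intros t [_ Ht].
  exact (Rle_lt_trans _ _ _ (clamp_dist a b t x) Ht).
Qed.

Lemma within_continuous_extension (g : R -> R) (a b : R) :
  a <= b ->
  (forall m, a <= m <= b ->
     filterlim g (within (fun y => a <= y <= b) (locally m)) (locally (g m))) ->
  exists h : R -> R, (forall x, continuity_pt h x) /\
    (forall x, a <= x <= b -> h x = g x) /\
    (forall x l, a < x < b -> is_derive g x l -> is_derive h x l).
Proof.
  intros Hab Hc. exists (fun t => g (clamp a b t)). split; [|split].
  - intros x e He.
    destruct (Hc _ (clamp_in a b x Hab) _ (locally_ball _ (mkposreal e He)))
      as [[d Hd] Hball].
    exists d. split; [exact Hd|]. intros t [_ Ht].
    exact (Hball _ (Rle_lt_trans _ _ _ (clamp_dist a b t x) Ht) (clamp_in a b t Hab)).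
  - intros x Hx. now rewrite clamp_id.
  - intros x l Hx Hl. apply (is_derive_ext_loc g); [|exact Hl].
    assert (Hd : 0 < Rmin (x - a) (b - x)) by (apply Rmin_case; lra).
    exists (mkposreal _ Hd). intros t Ht. change (Rabs (t - x) < Rmin (x - a) (b - x)) in Ht.
    assert (Rmin (x - a) (b - x) <= x - a) by apply Rmin_l.
    assert (Rmin (x - a) (b - x) <= b - x) by apply Rmin_r.
    apply Rabs_def2 in Ht. rewrite clamp_id; [reflexivity | lra].
Qed.

Lemma continuity_ab_ub (f : R -> R) (a b : R) :
  a <= b -> (forall x, a <= x <= b -> continuity_pt f x) ->
  exists M, 0 <= M /\ forall x, a <= x <= b -> f x <= M.
Proof.
  intros Hab Hc. destruct (continuity_ab_maj f a b Hab Hc) as [p [Hmax _]].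
  exists (Rmax (f p) 0). split; [apply Rmax_r|].
  intros x Hx. eapply Rle_trans; [apply Hmax, Hx | apply Rmax_l].
Qed.

Lemma exists_admissible_eps (c xbar A B : R) :
  0 < c < xbar -> 0 <= A -> 0 < B ->
  exists eps, 0 < eps < 2 * Rmin c (xbar - c) /\ eps <= c / 2 /\
    eps * xbar <= 1 / 2 /\ eps * A < B.
Proof.
  intros Hc HA HB.
  set (eps := Rmin (Rmin (c / 2) ((xbar - c) / 2)) (Rmin (/ (2 * xbar)) (B / (A + 1)))).
  assert (H1 : eps <= c / 2) by (eapply Rle_trans; [apply Rmin_l | apply Rmin_l]).
  assert (H2 : eps <= (xbar - c) / 2) by (eapply Rle_trans; [apply Rmin_l | apply Rmin_r]).
  assert (H3 : eps <= / (2 * xbar)) by (eapply Rle_trans; [apply Rmin_r | apply Rmin_l]).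
  assert (H4 : eps <= B / (A + 1)) by (eapply Rle_trans; [apply Rmin_r | apply Rmin_r]).
  assert (Hpos : 0 < eps).
  { assert (0 < / (2 * xbar)) by (apply Rinv_0_lt_compat; lra).
    assert (0 < B / (A + 1)) by (apply Rdiv_lt_0_compat; lra).
    unfold eps; repeat apply Rmin_case; lra. }
  exists eps. repeat split; try lra.
  - unfold Rmin at 1; destruct Rle_dec; lra.
  - apply (Rmult_le_compat_r xbar) in H3; [|lra].
    replace (/ (2 * xbar) * xbar) with (1 / 2) in H3 by (field; lra). exact H3.
  - apply (Rmult_le_compat_r (A + 1)) in H4; [|lra].
    replace (B / (A + 1) * (A + 1)) with B in H4 by (field; lra). nra.
Qed.

(** * The density f_eps *)

Section DensityEps.

Variables c xbar eps : R.
Hypothesis Hc : 0 < c < xbar.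
Hypothesis Heps : 0 < eps.
Hypothesis Hec : eps <= c / 2.
Hypothesis Hex : eps * xbar <= 1 / 2.

Local Notation d := (d_eps c xbar eps).

Lemma d_eps_mul_ge : 1 / 2 <= d * c.
Proof.
  assert (Hd : d * (c - eps / 2) = 1 - eps * (xbar - c - eps / 2))
    by (unfold d_eps; field; lra).
  assert (1 / 2 <= 1 - eps * (xbar - c - eps / 2)) by nra.
  assert (0 < d) by (destruct (Rle_or_lt d 0); nra).
  nra.
Qed.

Lemma eps_lt_d_eps : eps < d.
Proof. assert (H := d_eps_mul_ge). nra. Qed.

Lemma f_eps_clamp x :
  0 <= x <= xbar -> f_eps c xbar eps x = clamp eps d ((1 - d / eps) * (x - c) + eps).
Proof.
  intros Hx. assert (Hd := eps_lt_d_eps).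
  assert (Hs : (1 - d / eps) * eps = eps - d) by (field; lra).
  assert (Hneg : 1 - d / eps < 0).
  { assert (1 < d / eps); [|lra].
    apply (Rmult_lt_reg_r eps); [lra|]. field_simplify; lra. }
  unfold f_eps, clamp.
  destruct (Rlt_dec x 0); [lra|].
  destruct (Rle_dec x (c - eps)).
  { assert (d <= (1 - d / eps) * (x - c) + eps) by nra.
    rewrite Rmin_right, Rmax_right; lra. }
  destruct (Rle_dec x c).
  { assert ((1 - d / eps) * (x - c) + eps <= d) by nra.
    assert (eps <= (1 - d / eps) * (x - c) + eps) by nra.
    rewrite Rmin_left, Rmax_right by lra. ring. }
  destruct (Rle_dec x xbar); [|lra].
  assert ((1 - d / eps) * (x - c) + eps <= eps) by nra.
  rewrite Rmin_left, Rmax_left; lra.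
Qed.

Lemma ex_RInt_f_eps a b : 0 <= a <= b -> b <= xbar -> ex_RInt (f_eps c xbar eps) a b.
Proof.
  intros Ha Hb.
  apply (ex_RInt_ext (fun x => clamp eps d ((1 - d / eps) * (x - c) + eps))).
  { intros x Hx. rewrite Rmin_left in Hx by lra. rewrite Rmax_right in Hx by lra.
    symmetry. apply f_eps_clamp. lra. }
  apply (ex_RInt_continuous (V := R_CompleteNormedModule)). intros z _.
  apply continuity_pt_filterlim.
  apply (continuity_pt_comp (fun x => (1 - d / eps) * (x - c) + eps) (clamp eps d)).
  - apply (is_derive_continuity_pt _ _ (1 - d / eps)). auto_derive; [exact I | ring].
  - apply continuity_pt_clamp.
Qed.

Lemma f_eps_ge x : 0 <= x <= xbar -> eps <= f_eps c xbar eps x.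
Proof.
  intros Hx. rewrite f_eps_clamp by exact Hx.
  apply clamp_in. assert (H := eps_lt_d_eps). lra.
Qed.

Lemma f_eps_right x : c < x <= xbar -> f_eps c xbar eps x = eps.
Proof.
  intros Hx. unfold f_eps.
  destruct (Rlt_dec x 0); [lra|]. destruct (Rle_dec x (c - eps)); [lra|].
  destruct (Rle_dec x c); [lra|]. destruct (Rle_dec x xbar); lra.
Qed.

Lemma F_eps_ge_lin m : 0 <= m <= xbar -> eps * m <= F_eps c xbar eps m.
Proof.
  intros Hm. unfold F_eps.
  assert (H : RInt (fun _ => eps) 0 m <= RInt (f_eps c xbar eps) 0 m).
  { apply RInt_le; [lra | apply ex_RInt_const | apply ex_RInt_f_eps; lra |].
    intros x Hx. apply f_eps_ge; lra. }
  rewrite RInt_const in H. change (scal (m - 0) eps) with ((m - 0) * eps) in H. lra.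
Qed.

(* The mass of [0, c - eps] alone is at least 1/4. *)
Lemma F_eps_ge_quarter m : c <= m <= xbar -> 1 / 4 <= F_eps c xbar eps m.
Proof.
  intros Hm. unfold F_eps.
  rewrite <- (RInt_Chasles (f_eps c xbar eps) 0 (c - eps) m)
    by (apply ex_RInt_f_eps; lra).
  assert (H1 : RInt (fun _ => d) 0 (c - eps) <= RInt (f_eps c xbar eps) 0 (c - eps)).
  { apply RInt_le; [lra | apply ex_RInt_const | apply ex_RInt_f_eps; lra |].
    intros x Hx. unfold f_eps.
    destruct (Rlt_dec x 0); [lra|]. destruct (Rle_dec x (c - eps)); lra. }
  assert (H2 : 0 <= RInt (f_eps c xbar eps) (c - eps) m).
  { apply RInt_ge_0; [lra | apply ex_RInt_f_eps; lra |].
    intros x Hx. assert (H := f_eps_ge x ltac:(lra)). lra. }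
  rewrite RInt_const in H1. change (scal (c - eps - 0) d) with ((c - eps - 0) * d) in H1.
  assert (Hd := d_eps_mul_ge). assert (Hde := eps_lt_d_eps).
  change (1 / 4 <= RInt (f_eps c xbar eps) 0 (c - eps) + RInt (f_eps c xbar eps) (c - eps) m).
  nra.
Qed.

Lemma f_eps_div_F_eps_pos m :
  0 < m <= xbar -> 0 < f_eps c xbar eps m / F_eps c xbar eps m.
Proof.
  intros Hm. apply Rdiv_lt_0_compat.
  - assert (H := f_eps_ge m ltac:(lra)). lra.
  - assert (H := F_eps_ge_lin m ltac:(lra)). nra.
Qed.

Lemma f_eps_div_F_eps_le m :
  c < m <= xbar -> f_eps c xbar eps m / F_eps c xbar eps m <= 4 * eps.
Proof.
  intros Hm. rewrite f_eps_right by exact Hm.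
  assert (HF := F_eps_ge_quarter m ltac:(lra)).
  apply Rle_div_l; [lra | nra].
Qed.

End DensityEps.

(** * The functions D, N and eta *)

Definition drift_ratio (mu sigma : R -> R) (x : R) : R := 2 * mu x / sigma x ^ 2.

Section Diffusion.

Context {alpha : Rbar} {mu sigma : R -> R} {r : R} {psi phi : R -> R}.
Context {U U1 U2 : R -> R} {ustar xbar : R} {eta : R -> R}.
Hypothesis HD : diffusion_assumptions alpha mu sigma.
Hypothesis Hr : 0 < r.
Hypothesis Ha : a_assumptions mu r U.
Hypothesis HU : U_assumptions mu sigma r U U1 U2 ustar.
Hypothesis Hxbar : is_xbar mu r U xbar.
Hypothesis Hpsi : is_psi alpha mu sigma r psi.
Hypothesis Hphi : is_phi alpha mu sigma r phi.
Hypothesis Heta : is_eta psi phi mu r U xbar eta.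

Local Notation N := (Nfun psi phi mu r U).
Local Notation D := (Dfun psi phi).
Local Notation G := (Gfun mu r).

Lemma inI_le x y : inI alpha x -> x <= y -> inI alpha y.
Proof. unfold inI. destruct alpha as [a| |]; simpl; intros; lra || trivial. Qed.

Lemma inI_left x : inI alpha x -> exists d, 0 < d /\ forall y, x - d < y -> inI alpha y.
Proof.
  unfold inI. destruct alpha as [a| |]; simpl; intros H.
  - exists (x - a). split; [lra | intros; simpl; lra].
  - contradiction.
  - exists 1. split; [lra | intros; exact I].
Qed.

Lemma inI_nonneg x : 0 <= x -> inI alpha x.
Proof. intros Hx. apply (inI_le 0); [apply HD | exact Hx]. Qed.

Lemma sigma_pos x : inI alpha x -> 0 < sigma x.
Proof. apply HD. Qed.

Lemma ex_derive_mu_sigma x : inI alpha x -> ex_derive mu x /\ ex_derive sigma x.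
Proof. apply HD. Qed.

Lemma solves_ode_is_derive u x :
  solves_ode alpha mu sigma r u -> inI alpha x ->
  is_derive u x (Derive u x) /\
  is_derive (Derive u) x (2 * (r * u x - mu x * Derive u x) / sigma x ^ 2).
Proof.
  intros Hode Hx. destruct (Hode x Hx) as [H1 [H2 H3]].
  split; [now apply Derive_correct|].
  replace (2 * (r * u x - mu x * Derive u x) / sigma x ^ 2) with (Derive (Derive u) x);
    [now apply Derive_correct|].
  assert (Hs := sigma_pos x Hx). field_simplify_eq; [nra | nra].
Qed.

Lemma solves_ode_continuity_pt u x :
  solves_ode alpha mu sigma r u -> inI alpha x ->
  continuity_pt u x /\ continuity_pt (Derive u) x.
Proof.
  intros Hode Hx. destruct (solves_ode_is_derive u x Hode Hx) as [H1 H2].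
  split; eapply is_derive_continuity_pt; eassumption.
Qed.

Lemma psi_derive_pos x : inI alpha x -> 0 < Derive psi x.
Proof.
  destruct Hpsi as [Hode [Hpos Hinc]].
  assert (Hge : forall x, inI alpha x -> 0 <= Derive psi x).
  { intros z Hz. destruct (Rle_or_lt 0 (Derive psi z)) as [|Hlt]; [assumption|exfalso].
    destruct (is_derive_neg_locally psi z _ (proj1 (solves_ode_is_derive psi z Hode Hz)) Hlt)
      as [d [Hd Hloc]].
    destruct (Hloc (d / 2) ltac:(lra)) as [_ Hdec].
    assert (psi z < psi (z + d / 2)) by (apply Hinc; [| apply (inI_le z) |]; auto; lra).
    lra. }
  intros Hx. destruct (Rle_lt_or_eq_dec _ _ (Hge x Hx)) as [|Heq]; [assumption|exfalso].
  (* at a critical point psi'' = 2 r psi / sigma^2 > 0, so psi' < 0 just to the left *)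
  destruct (solves_ode_is_derive psi x Hode Hx) as [_ H2].
  assert (Hconv : 0 < 2 * (r * psi x - mu x * Derive psi x) / sigma x ^ 2).
  { rewrite <- Heq. assert (Hs := sigma_pos x Hx). assert (Hp := Hpos x Hx).
    apply Rdiv_lt_0_compat; nra. }
  destruct (is_derive_pos_locally _ x _ H2 Hconv) as [d [Hd Hloc]].
  destruct (inI_left x Hx) as [d' [Hd' Hleft]].
  set (h := Rmin (d / 2) (d' / 2)).
  assert (0 < h < d) by (unfold h; apply Rmin_case_strong; intros; lra).
  assert (h <= d' / 2) by apply Rmin_r.
  destruct (Hloc h ltac:(lra)) as [Hlow _].
  specialize (Hge (x - h) (Hleft (x - h) ltac:(lra))). lra.
Qed.

Lemma phi_derive_neg x : inI alpha x -> Derive phi x < 0.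
Proof.
  destruct Hphi as [Hode [Hpos Hdec]].
  assert (Hle : forall x, inI alpha x -> Derive phi x <= 0).
  { intros z Hz. destruct (Rle_or_lt (Derive phi z) 0) as [|Hlt]; [assumption|exfalso].
    destruct (is_derive_pos_locally phi z _ (proj1 (solves_ode_is_derive phi z Hode Hz)) Hlt)
      as [d [Hd Hloc]].
    destruct (Hloc (d / 2) ltac:(lra)) as [_ Hinc].
    assert (phi (z + d / 2) < phi z) by (apply Hdec; [| apply (inI_le z) |]; auto; lra).
    lra. }
  intros Hx. destruct (Rle_lt_or_eq_dec _ _ (Hle x Hx)) as [|Heq]; [assumption|exfalso].
  destruct (solves_ode_is_derive phi x Hode Hx) as [_ H2].
  assert (Hconv : 0 < 2 * (r * phi x - mu x * Derive phi x) / sigma x ^ 2).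
  { rewrite Heq. assert (Hs := sigma_pos x Hx). assert (Hp := Hpos x Hx).
    apply Rdiv_lt_0_compat; nra. }
  destruct (is_derive_pos_locally _ x _ H2 Hconv) as [d [Hd Hloc]].
  destruct (Hloc (d / 2) ltac:(lra)) as [_ Hup].
  specialize (Hle (x + d / 2) (inI_le x (x + d / 2) Hx ltac:(lra))). lra.
Qed.

Lemma Dfun_pos x m : 0 <= x -> 0 <= m -> 0 < D x m.
Proof.
  intros Hx Hm. unfold Dfun.
  assert (0 < Derive psi x) by (apply psi_derive_pos, inI_nonneg, Hx).
  assert (Derive phi x < 0) by (apply phi_derive_neg, inI_nonneg, Hx).
  assert (0 < psi m) by (apply Hpsi, inI_nonneg, Hm).
  assert (0 < phi m) by (apply Hphi, inI_nonneg, Hm).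
  nra.
Qed.

Lemma Gfun_lower_bound : exists g0, 0 < g0 /\ forall x, 0 <= x -> g0 <= G x.
Proof.
  destruct Ha as [_ [k [Hk Hmu']]]. exists (1 - k / r). split.
  - assert (k / r < 1); [apply Rlt_div_l; lra | lra].
  - intros x Hx. unfold Gfun. assert (Derive mu x / r <= k / r); [|lra].
    apply Rmult_le_compat_r; [left; apply Rinv_0_lt_compat, Hr | apply Hmu', Hx].
Qed.

Lemma Gfun_pos x : 0 <= x -> 0 < G x.
Proof.
  intros Hx. destruct Gfun_lower_bound as [g0 [Hg0 HG]].
  specialize (HG x Hx). lra.
Qed.

Lemma Nfun_diag x : N x x = D x x * ((mu x - r * U x) / r).
Proof. unfold Nfun. field. lra. Qed.

Lemma Nfun_diag_pos x : 0 <= x < xbar -> 0 < N x x.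
Proof.
  intros Hx. rewrite Nfun_diag. apply Rmult_lt_0_compat; [apply Dfun_pos; lra|].
  apply Rdiv_lt_0_compat; [|exact Hr].
  destruct Hxbar as [_ [Hpos _]]. specialize (Hpos x Hx). lra.
Qed.

Lemma is_derive_Nfun_x m x :
  inI alpha x ->
  is_derive (fun t => N t m) x (- G x * D x m - drift_ratio mu sigma x * N x m).
Proof.
  intros Hx.
  destruct (solves_ode_is_derive psi x (proj1 Hpsi) Hx) as [P1 P2].
  destruct (solves_ode_is_derive phi x (proj1 Hphi) Hx) as [F1 F2].
  assert (Hmu := proj1 (ex_derive_mu_sigma x Hx)).
  unfold Nfun, Dfun, Gfun, drift_ratio. auto_derive.
  - repeat split; try (eexists; eassumption); assumption.
  - change (Derive (fun t => psi t) x) with (Derive psi x).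
    change (Derive (fun t => phi t) x) with (Derive phi x).
    change (Derive (fun t => mu t) x) with (Derive mu x).
    change (Derive (fun t => Derive psi t) x) with (Derive (Derive psi) x).
    change (Derive (fun t => Derive phi t) x) with (Derive (Derive phi) x).
    rewrite (is_derive_unique _ _ _ P2), (is_derive_unique _ _ _ F2).
    assert (Hs := sigma_pos x Hx). field. lra.
Qed.

Lemma is_derive_RInt_drift_ratio x :
  inI alpha x ->
  is_derive (fun t => RInt (drift_ratio mu sigma) 0 t) x (drift_ratio mu sigma x).
Proof.
  intros Hx.
  assert (Hcont : forall z, inI alpha z -> continuous (drift_ratio mu sigma) z).
  { intros z Hz. apply (ex_derive_continuous (K := R_AbsRing) (V := R_NormedModule)).
    destruct (ex_derive_mu_sigma z Hz). assert (Hs := sigma_pos z Hz).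
    unfold drift_ratio. auto_derive. repeat split; auto. nra. }
  apply (is_derive_RInt (V := R_CompleteNormedModule) _ _ 0); [|exact (Hcont x Hx)].
  destruct (inI_left x Hx) as [d [Hd Hleft]].
  exists (mkposreal d Hd). intros t Ht. change (Rabs (t - x) < d) in Ht.
  apply (RInt_correct (V := R_CompleteNormedModule)), ex_RInt_continuous.
  intros z Hz. apply Hcont. apply Rabs_def2 in Ht.
  revert Hz; apply Rmin_case; intros Hz.
  - apply inI_nonneg. lra.
  - apply (inI_le t); [apply Hleft|]; lra.
Qed.

(* (N / s)' = - G D / s < 0 *)
Lemma Nfun_div_scale_decreasing m x1 x2 :
  0 <= m -> 0 <= x1 < x2 ->
  N x2 m / scale_dens mu sigma x2 < N x1 m / scale_dens mu sigma x1.
Proof.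
  intros Hm Hx12.
  assert (Hinv : forall x, / scale_dens mu sigma x = exp (RInt (drift_ratio mu sigma) 0 x)).
  { intros x. unfold scale_dens. rewrite exp_Ropp, Rinv_inv. reflexivity. }
  unfold Rdiv. rewrite !Hinv.
  apply (is_derive_neg_decreasing (fun t => N t m * exp (RInt (drift_ratio mu sigma) 0 t))
           (fun t => - G t * D t m * exp (RInt (drift_ratio mu sigma) 0 t)) 0);
    [|lra | lra].
  intros t Ht. assert (HtI := inI_nonneg t Ht). split.
  - replace (- G t * D t m * exp (RInt (drift_ratio mu sigma) 0 t)) with
      (plus (mult (- G t * D t m - drift_ratio mu sigma t * N t m)
                  (exp (RInt (drift_ratio mu sigma) 0 t)))
            (mult (N t m) (drift_ratio mu sigma t * exp (RInt (drift_ratio mu sigma) 0 t))))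
      by (unfold plus, mult; simpl; ring).
    apply (is_derive_mult (K := R_AbsRing) (fun t => N t m)
             (fun t => exp (RInt (drift_ratio mu sigma) 0 t)));
      [apply is_derive_Nfun_x, HtI | | apply Rmult_comm].
    apply (is_derive_comp exp (fun t => RInt (drift_ratio mu sigma) 0 t));
      [apply is_derive_exp | apply is_derive_RInt_drift_ratio, HtI].
  - assert (0 < G t * D t m * exp (RInt (drift_ratio mu sigma) 0 t)); [|lra].
    apply Rmult_lt_0_compat; [apply Rmult_lt_0_compat | apply exp_pos].
    + apply Gfun_pos, Ht.
    + apply Dfun_pos; assumption.
Qed.

Lemma Nfun_neg_right m x0 x : 0 <= m -> 0 <= x0 -> N x0 m = 0 -> x0 < x -> N x m < 0.
Proof.
  intros Hm Hx0 Hz Hlt. assert (H := Nfun_div_scale_decreasing m x0 x Hm (conj Hx0 Hlt)).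
  rewrite Hz in H. unfold Rdiv in H. rewrite Rmult_0_l in H.
  assert (0 < / scale_dens mu sigma x) by (apply Rinv_0_lt_compat, exp_pos). nra.
Qed.

Lemma Nfun_pos_left m x0 x : 0 <= m -> 0 <= x -> N x0 m = 0 -> x < x0 -> 0 < N x m.
Proof.
  intros Hm Hx Hz Hlt. assert (H := Nfun_div_scale_decreasing m x x0 Hm (conj Hx Hlt)).
  rewrite Hz in H. unfold Rdiv in H. rewrite Rmult_0_l in H.
  assert (0 < / scale_dens mu sigma x) by (apply Rinv_0_lt_compat, exp_pos). nra.
Qed.

Lemma Nfun_neg_of_eta_lt m x : 0 <= m <= xbar -> eta m < x -> N x m < 0.
Proof.
  intros Hm Hlt. destruct (Heta m Hm) as [He0 Hez].
  exact (Nfun_neg_right m (eta m) x ltac:(lra) He0 Hez Hlt).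
Qed.

Lemma eta_lt_of_Nfun_neg m x : 0 <= m <= xbar -> 0 <= x -> N x m < 0 -> eta m < x.
Proof.
  intros Hm Hx HN. destruct (Heta m Hm) as [He0 Hez].
  destruct (Rtotal_order (eta m) x) as [|[Heq | Hgt]]; [assumption | exfalso..].
  - rewrite <- Heq in HN. lra.
  - assert (H := Nfun_pos_left m (eta m) x ltac:(lra) Hx Hez Hgt). lra.
Qed.

Lemma lt_eta_of_Nfun_pos m x : 0 <= m <= xbar -> 0 <= x -> 0 < N x m -> x < eta m.
Proof.
  intros Hm Hx HN. destruct (Heta m Hm) as [He0 Hez].
  destruct (Rtotal_order x (eta m)) as [|[Heq | Hgt]]; [assumption | exfalso..].
  - rewrite Heq in HN. lra.
  - assert (H := Nfun_neg_right m (eta m) x ltac:(lra) He0 Hez Hgt). lra.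
Qed.

Lemma Nfun_combination y m :
  N y m = (phi y - Derive phi y * (mu y / r)) * psi m
          + (Derive psi y * (mu y / r) - psi y) * phi m - D y y * U m.
Proof. unfold Nfun, Dfun. ring. Qed.

Lemma combination_is_derive A B W t :
  0 < t ->
  is_derive (fun s => A * psi s + B * phi s - W * U s) t
    (A * Derive psi t + B * Derive phi t - W * U1 t) /\
  is_derive (fun s => A * Derive psi s + B * Derive phi s - W * U1 s) t
    (A * Derive (Derive psi) t + B * Derive (Derive phi) t - W * U2 t).
Proof.
  intros Ht. assert (HtI := inI_nonneg t ltac:(lra)).
  destruct (proj1 Hpsi t HtI) as [P1 [P2 _]].
  destruct (proj1 Hphi t HtI) as [F1 [F2 _]].
  destruct HU as [_ [_ [_ [HUd _]]]]. destruct (HUd t Ht) as [U1d U2d].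
  split; auto_derive; try (repeat split; (assumption || (eexists; eassumption))).
  - change (Derive (fun x => psi x) t) with (Derive psi t).
    change (Derive (fun x => phi x) t) with (Derive phi t).
    change (Derive (fun x => U x) t) with (Derive U t).
    rewrite (is_derive_unique _ _ _ U1d). ring.
  - change (Derive (fun x => Derive psi x) t) with (Derive (Derive psi) t).
    change (Derive (fun x => Derive phi x) t) with (Derive (Derive phi) t).
    change (Derive (fun x => U1 x) t) with (Derive U1 t).
    rewrite (is_derive_unique _ _ _ U2d). ring.
Qed.

Lemma combination_generator A B W t :
  0 < t ->
  / 2 * sigma t ^ 2 * (A * Derive (Derive psi) t + B * Derive (Derive phi) t - W * U2 t)
  + mu t * (A * Derive psi t + B * Derive phi t - W * U1 t)
  - r * (A * psi t + B * phi t - W * U t)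
  = - W * (mu t * U1 t + / 2 * sigma t ^ 2 * U2 t - r * U t).
Proof.
  intros Ht. assert (HtI := inI_nonneg t ltac:(lra)).
  destruct (proj1 Hpsi t HtI) as [_ [_ Lpsi]].
  destruct (proj1 Hphi t HtI) as [_ [_ Lphi]].
  transitivity
    (A * (/ 2 * sigma t ^ 2 * Derive (Derive psi) t + mu t * Derive psi t - r * psi t)
     + B * (/ 2 * sigma t ^ 2 * Derive (Derive phi) t + mu t * Derive phi t - r * phi t)
     - W * (mu t * U1 t + / 2 * sigma t ^ 2 * U2 t - r * U t)); [ring|].
  rewrite Lpsi, Lphi. ring.
Qed.

Lemma Nfun_neg_below y c :
  0 < c < y -> y < ustar -> y < xbar -> N y 0 < 0 -> N y c < 0 ->
  forall m, 0 <= m <= c -> N y m < 0.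
Proof.
  intros Hcy Hyu Hyx H0 Hc m1 Hm1.
  destruct (Rlt_or_le (N y m1) 0) as [|Hge]; [assumption|exfalso].
  assert (Hm1p : 0 < m1) by (destruct (Req_dec m1 0) as [->|]; lra).
  assert (Hm1c : m1 < c) by (destruct (Req_dec m1 c) as [->|]; lra).
  set (A := phi y - Derive phi y * (mu y / r)).
  set (B := Derive psi y * (mu y / r) - psi y).
  set (W := D y y).
  set (n := fun t => A * psi t + B * phi t - W * U t).
  assert (Hn : forall t, n t = N y t) by (intros t; rewrite Nfun_combination; reflexivity).
  assert (Hnc : 0 <= n c).
  { apply (min_principle n (fun t => A * Derive psi t + B * Derive phi t - W * U1 t)
             (fun t => A * Derive (Derive psi) t + B * Derive (Derive phi) t - W * U2 t)
             mu sigma r m1 y); try lra.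
    - intros t Ht. apply combination_is_derive. lra.
    - intros t Ht. rewrite combination_generator by lra.
      destruct HU as [_ [_ [_ [_ [_ [_ [_ [_ [_ HLU]]]]]]]]].
      assert (0 < W * (mu t * U1 t + / 2 * sigma t ^ 2 * U2 t - r * U t))
        by (apply Rmult_lt_0_compat; [apply Dfun_pos | apply HLU]; lra).
      lra.
    - rewrite Hn. exact Hge.
    - rewrite Hn. left. apply Nfun_diag_pos. lra. }
  rewrite Hn in Hnc. lra.
Qed.

Lemma exists_barrier_above c :
  0 < c < xbar -> eta 0 < ustar -> eta c < ustar -> ustar <= xbar ->
  exists y, eta 0 < y < ustar /\
    forall m x, 0 <= m <= c -> y <= x -> N x m < 0.
Proof.
  intros Hc He0 Hec Hux.
  set (y := (Rmax (eta 0) (eta c) + ustar) / 2).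
  assert (Hmax : Rmax (eta 0) (eta c) < ustar) by (apply Rmax_case; lra).
  assert (Hy0 : eta 0 < y) by (unfold y; assert (H := Rmax_l (eta 0) (eta c)); lra).
  assert (Hyc : eta c < y) by (unfold y; assert (H := Rmax_r (eta 0) (eta c)); lra).
  assert (Hyu : y < ustar) by (unfold y; lra).
  assert (Hcc : c < eta c) by (apply lt_eta_of_Nfun_pos, Nfun_diag_pos; lra).
  exists y. split; [lra|]. intros m x Hm Hxy.
  apply Nfun_neg_of_eta_lt; [lra|].
  enough (eta m < y) by lra.
  apply eta_lt_of_Nfun_neg; [lra | lra |].
  apply (Nfun_neg_below y c); try lra; apply Nfun_neg_of_eta_lt; lra.
Qed.

Lemma exists_solution_ub :
  exists M, 0 <= M /\ forall z, 0 <= z <= xbar ->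
    psi z <= M /\ phi z <= M /\ Derive psi z <= M /\ - Derive phi z <= M /\ mu z <= M.
Proof.
  assert (Hxb : 0 < xbar) by apply Hxbar.
  assert (Hcont : forall u, solves_ode alpha mu sigma r u ->
            (forall z, 0 <= z <= xbar -> continuity_pt u z) /\
            (forall z, 0 <= z <= xbar -> continuity_pt (Derive u) z)).
  { intros u Hu. split; intros z Hz;
      apply (solves_ode_continuity_pt u z Hu), inI_nonneg; lra. }
  destruct (Hcont psi (proj1 Hpsi)) as [Cpsi Cpsi'].
  destruct (Hcont phi (proj1 Hphi)) as [Cphi Cphi'].
  destruct (continuity_ab_ub psi 0 xbar ltac:(lra) Cpsi) as [M1 [HM1 B1]].
  destruct (continuity_ab_ub phi 0 xbar ltac:(lra) Cphi) as [M2 [HM2 B2]].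
  destruct (continuity_ab_ub (Derive psi) 0 xbar ltac:(lra) Cpsi') as [M3 [HM3 B3]].
  destruct (continuity_ab_ub (- Derive phi)%F 0 xbar ltac:(lra)) as [M4 [HM4 B4]].
  { intros z Hz. apply continuity_pt_opp, Cphi', Hz. }
  destruct (continuity_ab_ub mu 0 xbar ltac:(lra)) as [M5 [HM5 B5]].
  { intros z Hz. destruct (ex_derive_mu_sigma z (inI_nonneg z ltac:(lra))) as [Hmu _].
    exact (is_derive_continuity_pt _ _ _ (Derive_correct _ _ Hmu)). }
  exists (M1 + M2 + M3 + M4 + M5). split; [lra|]. intros z Hz.
  specialize (B1 z Hz). specialize (B2 z Hz). specialize (B3 z Hz).
  specialize (B4 z Hz). specialize (B5 z Hz). unfold opp_fct in B4.
  repeat split; lra.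
Qed.

Lemma exists_DG_lower_bound :
  exists delta, 0 < delta /\ forall x m, 0 <= x <= xbar -> 0 <= m <= xbar ->
    delta <= D x m * G x.
Proof.
  assert (Hxb : 0 < xbar) by apply Hxbar.
  destruct (continuity_ab_min (Derive psi) 0 xbar ltac:(lra)) as [p [Hmin Hp]].
  { intros z Hz. apply (solves_ode_continuity_pt psi z (proj1 Hpsi)), inI_nonneg. lra. }
  destruct Gfun_lower_bound as [g0 [Hg0 HG]].
  assert (Hpsi'p : 0 < Derive psi p) by (apply psi_derive_pos, inI_nonneg; lra).
  assert (Hphixb : 0 < phi xbar) by (apply Hphi, inI_nonneg; lra).
  exists (Derive psi p * phi xbar * g0).
  split; [apply Rmult_lt_0_compat; [apply Rmult_lt_0_compat|]; assumption|].
  intros x m Hx Hm.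
  assert (Hphim : phi xbar <= phi m).
  { destruct (Req_dec m xbar) as [->|]; [lra|].
    left. apply Hphi; [apply inI_nonneg; lra.. | lra]. }
  assert (Derive psi p * phi xbar <= Derive psi x * phi m)
    by (apply Rmult_le_compat; [lra | lra | apply Hmin; lra | exact Hphim]).
  assert (Derive phi x < 0) by (apply phi_derive_neg, inI_nonneg; lra).
  assert (0 < psi m) by (apply Hpsi, inI_nonneg; lra).
  unfold Dfun. apply Rmult_le_compat; [nra | lra | nra | apply HG; lra].
Qed.

Lemma Nfun_le_of_ub M x m :
  (forall z, 0 <= z <= xbar ->
     psi z <= M /\ phi z <= M /\ Derive psi z <= M /\ - Derive phi z <= M /\ mu z <= M) ->
  0 <= x <= xbar -> 0 <= m <= xbar -> N x m <= M * M + 2 * M * M * M / r.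
Proof.
  intros HM Hx Hm.
  destruct (HM x Hx) as [_ [Hphix [Hpsi'x [Hphi'x Hmux]]]].
  destruct (HM m Hm) as [Hpsim [Hphim _]].
  assert (0 < psi x) by (apply Hpsi, inI_nonneg; lra).
  assert (0 < psi m) by (apply Hpsi, inI_nonneg; lra).
  assert (0 < phi x) by (apply Hphi, inI_nonneg; lra).
  assert (0 < phi m) by (apply Hphi, inI_nonneg; lra).
  assert (0 < Derive psi x) by (apply psi_derive_pos, inI_nonneg; lra).
  assert (Derive phi x < 0) by (apply phi_derive_neg, inI_nonneg; lra).
  assert (HDpos : 0 < D x m) by (apply Dfun_pos; lra).
  assert (HDup : D x m <= 2 * M * M).
  { unfold Dfun.
    assert (Derive psi x * phi m <= M * M) by (apply Rmult_le_compat; lra).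
    assert (- Derive phi x * psi m <= M * M) by (apply Rmult_le_compat; lra).
    lra. }
  assert (phi x * psi m <= M * M) by (apply Rmult_le_compat; lra).
  assert (0 < psi x * phi m) by (apply Rmult_lt_0_compat; lra).
  assert (0 <= D x x * U m) by (apply Rmult_le_pos; [left; apply Dfun_pos | apply HU]; lra).
  assert (D x m * (mu x / r) <= 2 * M * M * M / r).
  { unfold Rdiv. rewrite <- Rmult_assoc.
    apply Rmult_le_compat_r; [left; apply Rinv_0_lt_compat, Hr|].
    apply (Rle_trans _ (D x m * M)); [apply Rmult_le_compat_l; lra|].
    apply Rmult_le_compat_r; lra. }
  unfold Nfun. lra.
Qed.

Lemma Nfun_le_mult_DG :
  exists K, 0 <= K /\ forall x m, 0 <= x <= xbar -> 0 <= m <= xbar ->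
    N x m <= K * (D x m * G x).
Proof.
  destruct exists_solution_ub as [M [HM0 HM]].
  destruct exists_DG_lower_bound as [delta [Hdelta Hlow]].
  set (Nmax := M * M + 2 * M * M * M / r).
  assert (HNmax : 0 <= Nmax).
  { assert (0 <= 2 * M * M * M / r) by (apply Rdiv_le_0_compat; [nra | lra]).
    unfold Nmax; nra. }
  exists (Nmax / delta). split; [apply Rdiv_le_0_compat; lra|].
  intros x m Hx Hm. specialize (Hlow x m Hx Hm).
  apply (Rle_trans _ Nmax); [apply Nfun_le_of_ub; assumption|].
  replace (Nmax / delta * (D x m * G x)) with (Nmax * ((D x m * G x) / delta))
    by (field; lra).
  rewrite <- (Rmult_1_r Nmax) at 1.
  apply Rmult_le_compat_l; [exact HNmax|].
  apply Rle_div_r; lra.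
Qed.

(** * The Cauchy problem *)

Lemma Efun_neg (f F : R -> R) x m :
  0 < f m / F m -> 0 < G x -> 0 < D x m -> N x m < 0 ->
  Efun f F psi phi mu r U x m < 0.
Proof.
  intros Hw HG HD' HN. unfold Efun.
  apply Rmult_pos_neg; [apply Rdiv_lt_0_compat | apply Rdiv_neg_pos]; assumption.
Qed.

Lemma Efun_le (f F : R -> R) K x m :
  0 <= f m / F m -> 0 < G x -> 0 < D x m -> N x m <= K * (D x m * G x) ->
  Efun f F psi phi mu r U x m <= f m / F m * K.
Proof.
  intros Hw HG HD' HN. unfold Efun. revert Hw. generalize (f m / F m). intros w Hw.
  replace (w / G x * (N x m / D x m)) with (w * (N x m / (D x m * G x))) by (field; lra).
  apply Rmult_le_compat_l; [exact Hw|].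
  apply Rle_div_l; [apply Rmult_lt_0_compat|]; assumption.
Qed.

Lemma cauchy_sol_below_left (c eps y : R) (b : R -> R) :
  0 < c < xbar -> 0 < eps -> eps <= c / 2 -> eps * xbar <= 1 / 2 ->
  eta 0 < y -> (forall m x, 0 <= m <= c -> y <= x -> N x m < 0) ->
  cauchy_sol (f_eps c xbar eps) (F_eps c xbar eps) psi phi mu r U xbar (eta 0) b ->
  forall m, 0 <= m <= c -> b m < y.
Proof.
  intros Hc Heps Hec Hex Hy HN [Hbnd [Hcont [Hder Hb0]]] m Hm.
  destruct (within_continuous_extension b 0 xbar ltac:(lra) Hcont) as [g [Hgc [Hgb Hgd]]].
  rewrite <- Hgb by lra.
  apply (stays_below g 0 m y); [lra | intros; apply Hgc | rewrite Hgb, Hb0; lra |].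
  intros p Hp Hyp. rewrite Hgb in Hyp by lra.
  exists (Efun (f_eps c xbar eps) (F_eps c xbar eps) psi phi mu r U (b p) p).
  split; [apply Hgd; [lra | apply Hder; lra]|].
  assert (Hbp := Hbnd p ltac:(lra)).
  apply Efun_neg.
  - apply f_eps_div_F_eps_pos; lra.
  - apply Gfun_pos. lra.
  - apply Dfun_pos; lra.
  - apply HN; lra.
Qed.

Lemma cauchy_sol_growth_right (c eps K : R) (b : R -> R) :
  0 < c < xbar -> 0 < eps -> eps <= c / 2 -> eps * xbar <= 1 / 2 -> 0 <= K ->
  (forall x m, 0 <= x <= xbar -> 0 <= m <= xbar -> N x m <= K * (D x m * G x)) ->
  cauchy_sol (f_eps c xbar eps) (F_eps c xbar eps) psi phi mu r U xbar (eta 0) b ->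
  forall m, c < m <= xbar -> b m <= b c + 4 * eps * K * (m - c).
Proof.
  intros Hc Heps Hec Hex HK0 HK [Hbnd [Hcont [Hder _]]] m Hm.
  destruct (within_continuous_extension b 0 xbar ltac:(lra) Hcont) as [g [Hgc [Hgb Hgd]]].
  rewrite <- !Hgb by lra.
  apply (is_derive_le_growth g
           (fun t => Efun (f_eps c xbar eps) (F_eps c xbar eps) psi phi mu r U (b t) t));
    [lra | intros; apply Hgc |].
  intros t Ht. assert (Hbt := Hbnd t ltac:(lra)). split.
  - apply Hgd; [lra | apply Hder; lra].
  - apply (Rle_trans _ (f_eps c xbar eps t / F_eps c xbar eps t * K)).
    + apply Efun_le.
      * left. apply f_eps_div_F_eps_pos; lra.
      * apply Gfun_pos. lra.
      * apply Dfun_pos; lra.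
      * apply HK; lra.
    + apply Rmult_le_compat_r; [exact HK0|]. apply f_eps_div_F_eps_le; lra.
Qed.

Lemma cauchy_sol_first_fixed_point (f F : R -> R) (b : R -> R) :
  0 < eta 0 -> cauchy_sol f F psi phi mu r U xbar (eta 0) b ->
  (forall m, 0 <= m <= xbar -> b m < ustar) ->
  exists mbar, is_first_fixed_point b xbar mbar /\ mbar < ustar.
Proof.
  intros He0 [Hbnd [Hcont [_ Hb0]]] Hbu.
  assert (Hxb : 0 < xbar) by apply Hxbar.
  destruct (within_continuous_extension b 0 xbar ltac:(lra) Hcont) as [g [Hgc [Hgb _]]].
  destruct (exists_first_root (fun t => g t - t) 0 xbar) as [l [Hl [Hgl Hfirst]]].
  - lra.
  - intros t _. apply continuity_pt_minus; [apply Hgc | apply continuity_pt_id].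
  - rewrite Hgb, Hb0; lra.
  - rewrite Hgb; [|lra]. assert (H := Hbnd xbar ltac:(lra)). lra.
  - assert (Hbl : b l = l) by (rewrite <- Hgb by lra; lra).
    exists l. split; [split; [exact Hl | split; [exact Hbl|]]|].
    + intros m Hm Hbm. destruct (Rle_or_lt l m) as [|Hml]; [assumption|exfalso].
      specialize (Hfirst m ltac:(lra)). rewrite Hgb in Hfirst by lra. lra.
    + rewrite <- Hbl. apply Hbu, Hl.
Qed.

End Diffusion.

Theorem lemma5 (alpha : Rbar) (mu sigma : R -> R) (r : R)
    (U U1 U2 : R -> R) (ustar xbar : R) (psi phi eta : R -> R) (c : R) :
  diffusion_assumptions alpha mu sigma ->
  0 < r ->
  a_assumptions mu r U ->
  U_assumptions mu sigma r U U1 U2 ustar ->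
  is_xbar mu r U xbar ->
  is_psi alpha mu sigma r psi ->
  is_phi alpha mu sigma r phi ->
  is_eta psi phi mu r U xbar eta ->
  0 < eta 0 < ustar ->
  0 < c < xbar ->
  eta c < ustar ->
  exists eps : R,
    0 < eps < 2 * Rmin c (xbar - c) /\
    forall b : R -> R,
      cauchy_sol (f_eps c xbar eps) (F_eps c xbar eps) psi phi mu r U xbar (eta 0) b ->
      exists mbar : R, is_first_fixed_point b xbar mbar /\ mbar < ustar.
Proof.
  intros HD Hr Ha HU Hxbar Hpsi Hphi Heta [Heta0 Heta0u] Hc Hetac.
  destruct (Rlt_or_le xbar ustar) as [Hxu | Hux].
  - destruct (exists_admissible_eps c xbar 0 1) as [eps [Heps _]]; try lra.
    exists eps. split; [exact Heps|]. intros b Hb.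
    apply (cauchy_sol_first_fixed_point Hxbar _ _ b Heta0 Hb). intros m Hm.
    destruct Hb as [Hbnd _]. specialize (Hbnd m Hm). lra.
  - destruct (exists_barrier_above HD Hr Ha HU Hxbar Hpsi Hphi Heta c)
      as [y [Hy HN]]; try lra.
    destruct (Nfun_le_mult_DG HD Hr Ha HU Hxbar Hpsi Hphi) as [K [HK0 HK]].
    destruct (exists_admissible_eps c xbar (4 * K * xbar) (ustar - y))
      as [eps [Heps [Hec [Hex HeK]]]]; try nra.
    exists eps. split; [exact Heps|]. intros b Hb.
    apply (cauchy_sol_first_fixed_point Hxbar _ _ b Heta0 Hb). intros m Hm.
    assert (Hleft := cauchy_sol_below_left HD Hr Ha Hpsi Hphi c eps y b
                       Hc (proj1 Heps) Hec Hex (proj1 Hy) HN Hb).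
    assert (Hright := cauchy_sol_growth_right HD Hr Ha Hpsi Hphi c eps K b
                        Hc (proj1 Heps) Hec Hex HK0 HK Hb).
    destruct (Rle_or_lt m c) as [Hmc | Hmc]; [specialize (Hleft m ltac:(lra)); lra|].
    specialize (Hleft c ltac:(lra)). specialize (Hright m ltac:(lra)).
    assert (0 <= eps * K * (xbar - (m - c)))
      by (apply Rmult_le_pos; [apply Rmult_le_pos|]; lra).
    nra.
Qed.
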